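(* Let $\mathbf{c}_{0:n}=(c_0,\dots,c_n)$ be a vector of covariance lags of some bounded non-negative measure on $\mathbb{T}$ such that the Toeplitz matrix $T_n=[c_{k-\ell}]_{k,\ell=0}^n$ (with $c_{-k}=\bar c_k$) is singular, and let $\hat{\mathbf{c}}_{0:n}(k)$, $k=1,2,\dots$, be a sequence of vectors of covariance lags (each the first $n+1$ covariances of some bounded non-negative measure on $\mathbb{T}$) with $\hat{\mathbf{c}}_{0:n}(k)\to\mathbf{c}_{0:n}$ as $k\to\infty$. If $\delta$ is a weakly continuous metric on the set $\mathfrak{M}$ of bounded non-negative measures on $\mathbb{T}$, then $\rho_\delta(\mathcal{F}_{\hat{\mathbf{c}}_{0:n}(k)})\to0$ as $k\to\infty$.
   Context: Covariance lags of $d\mu$: $c_k=\frac{1}{2\pi}\int_{-\pi}^{\pi}e^{-ik\theta}d\mu(\theta)$. For $\mathbf{a}=(a_0,\dots,a_n)$, $\mathcal{F}_{\mathbf{a}}=\{d\mu\in\mathfrak{M}:\frac{1}{2\pi}\int_{-\pi}^{\pi}e^{-ik\theta}d\mu(\theta)=a_k,\ k=0,\dots,n\}$. The diameter is $\rho_\delta(\mathcal{F})=\sup\{\delta(d\mu_0,d\mu_1):d\mu_0,d\mu_1\in\mathcal{F}\}$. Weak topology on $\mathfrak{M}$: $d\mu_k\to d\mu$ iff $\int fd\mu_k\to\int fd\mu$ for all real continuous $f$ on $\mathbb{T}$; $\delta$ is weakly continuous if it is continuous on $\mathfrak{M}\times\mathfrak{M}$ for this topology. *)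

From HB Require Import structures.
From mathcomp Require Import all_boot all_order all_algebra.
From mathcomp Require Import all_classical all_reals all_analysis.
From mathcomp Require Import complex.
Set Implicit Arguments. Unset Strict Implicit. Unset Printing Implicit Defensive.
Import Order.TTheory GRing.Theory Num.Theory.
Import numFieldNormedType.Exports.
Local Open Scope classical_set_scope.
Local Open Scope ring_scope.

(* Measures on the unit circle T are modelled as finite (Borel) measures on R
   concentrated on the fundamental domain [-pi, pi[ (theta <-> e^{i theta}). *)
Notation tmeas R := {finite_measure set (measurableTypeR R) -> \bar R}.

Definition onT (R : realType) (mu : tmeas R) : Prop :=
  mu (~` `[(- pi)%R, pi[%classic) = 0%E.

Definition rint (R : realType) (mu : tmeas R) (f : R -> R) : R :=
  fine (\int[mu]_x (f x)%:E)%E.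

Definition covlag (R : realType) (mu : tmeas R) (k : nat) : R[i] :=
  Complex ((2 * pi)^-1 * rint mu (fun t => cos (k%:R * t)))
          (- ((2 * pi)^-1 * rint mu (fun t => sin (k%:R * t)))).

Definition is_covlags (R : realType) (n : nat) (a : 'I_n.+1 -> R[i]) : Prop :=
  exists mu : tmeas R, onT mu /\ forall k : 'I_n.+1, covlag mu k = a k.

Definition Fset (R : realType) (n : nat) (a : 'I_n.+1 -> R[i]) : set (tmeas R) :=
  [set mu | onT mu /\ forall k : 'I_n.+1, covlag mu k = a k].

Definition toeplitz (R : realType) (n : nat) (c : 'I_n.+1 -> R[i]) : 'M[R[i]]_n.+1 :=
  \matrix_(k, l) (if (l <= k)%N then c (inord (k - l)) else (c (inord (l - k)))^*%C).

(* real continuous functions on T = continuous 2pi-periodic functions on R *)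
Definition contT (R : realType) (f : R -> R) : Prop :=
  continuous f /\ forall x, f (x + 2 * pi) = f x.

Definition is_metric (R : realType) (delta : tmeas R -> tmeas R -> R) : Prop :=
  [/\ forall m0 m1, onT m0 -> onT m1 -> 0 <= delta m0 m1,
      forall m0 m1, onT m0 -> onT m1 ->
        (delta m0 m1 = 0 <-> forall A, measurable A -> m0 A = m1 A),
      forall m0 m1, onT m0 -> onT m1 -> delta m0 m1 = delta m1 m0 &
      forall m0 m1 m2, onT m0 -> onT m1 -> onT m2 ->
        delta m0 m2 <= delta m0 m1 + delta m1 m2].

Definition weak_nbhd (R : realType) (mu : tmeas R) (fs : seq (R -> R)) (eta : R)
  (nu : tmeas R) : Prop :=
  onT nu /\ forall f, f \in fs -> `|rint nu f - rint mu f| < eta.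

(* delta is continuous on M x M for the product of the weak topologies *)
Definition weakly_continuous (R : realType) (delta : tmeas R -> tmeas R -> R) : Prop :=
  forall m0 m1, onT m0 -> onT m1 -> forall eps : R, 0 < eps ->
    exists (fs0 fs1 : seq (R -> R)) (eta : R),
      [/\ forall f, f \in fs0 -> contT f, forall f, f \in fs1 -> contT f, 0 < eta &
      forall n0 n1, weak_nbhd m0 fs0 eta n0 -> weak_nbhd m1 fs1 eta n1 ->
        `|delta n0 n1 - delta m0 m1| < eps].

Definition diam (R : realType) (delta : tmeas R -> tmeas R -> R) (F : set (tmeas R)) : \bar R :=
  ereal_sup [set (delta m0 m1)%:E | m0 in F & m1 in F].

From HB Require Import structures.
From mathcomp Require Import all_boot all_order all_algebra.
From mathcomp Require Import all_classical all_reals all_analysis.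
From mathcomp Require Import complex.
From mathcomp Require Import ring lra measurable_realfun.
Set Implicit Arguments. Unset Strict Implicit. Unset Printing Implicit Defensive.
Import Order.TTheory GRing.Theory Num.Theory.
Import numFieldNormedType.Exports.
Local Open Scope classical_set_scope.
Local Open Scope ring_scope.

(* Let v be a nonzero vector with v T_n = 0 and Q(z) = sum_l conj(v_l) z^l.
   The trigonometric polynomial P(t) = |Q(e^{it})|^2 is nonnegative, its
   integral against a measure is the Hermitian form of the Toeplitz matrix of
   the lags at v, so it vanishes for c and tends to 0 along chat(k).  A
   continuous f on T agrees, at the at most n zeros of Q on the circle, with a
   trigonometric polynomial h of degree n, and compactness gives
   |f - h| <= eps + C P.  Since the integral of h only depends on the lags, the
   integral of f against any measure in F_{chat(k)} converges to its integral
   against a fixed measure with lags c, uniformly in the measure; the sets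
   F_{chat(k)} thus shrink to one point in the weak topology, and by weak
   continuity their delta-diameters tend to 0. *)

Local Notation cRe := complex.Re.
Local Notation cIm := complex.Im.

Section ComplexArith.
Variable R : realType.

Lemma ReM (x y : R[i]) : cRe (x * y) = cRe x * cRe y - cIm x * cIm y.
Proof. by case: x => a b; case: y. Qed.

Lemma ImM (x y : R[i]) : cIm (x * y) = cRe x * cIm y + cIm x * cRe y.
Proof. by case: x => a b; case: y. Qed.

Lemma ReD (x y : R[i]) : cRe (x + y) = cRe x + cRe y.
Proof. by case: x => a b; case: y. Qed.

Lemma Re_sum (I : Type) (s : seq I) (P : pred I) (F : I -> R[i]) :
  cRe (\sum_(i <- s | P i) F i) = \sum_(i <- s | P i) cRe (F i).
Proof. by elim/big_rec2: _ => // i x y _ <-; rewrite ReD. Qed.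

Lemma ReJ (x : R[i]) : cRe x^*%C = cRe x. Proof. by case: x. Qed.

Lemma ImJ (x : R[i]) : cIm x^*%C = - cIm x. Proof. by case: x. Qed.

Definition expi (t : R) : R[i] := Complex (cos t) (sin t).

Lemma expiX (t : R) (k : nat) : expi t ^+ k = expi (k%:R * t).
Proof.
elim: k => [|k IH]; first by rewrite expr0 mul0r /expi cos0 sin0.
rewrite exprSr IH /expi; apply/eqP; rewrite eq_complex; apply/andP; split; apply/eqP.
  by rewrite ReM /= -cosD mulrSr mulrDl mul1r.
by rewrite ImM /= mulrSr mulrDl mul1r sinD addrC.
Qed.

Lemma conj_expiM (a b : R) : (expi a)^*%C * expi b = expi (b - a).
Proof.
rewrite /expi; apply/eqP; rewrite eq_complex; apply/andP; split; apply/eqP.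
  by rewrite ReM /= cosB; lra.
by rewrite ImM /= sinB; lra.
Qed.

End ComplexArith.

Section Continuity.
Variable R : realType.
Implicit Types f g : R -> R.

Lemma contD f g : continuous f -> continuous g -> continuous (fun t => f t + g t).
Proof. by move=> cf cg x; exact: (continuousD (cf x) (cg x)). Qed.

Lemma contM f g : continuous f -> continuous g -> continuous (fun t => f t * g t).
Proof. by move=> cf cg x; exact: (continuousM (cf x) (cg x)). Qed.

Lemma contN f : continuous f -> continuous (fun t => - f t).
Proof. by move=> cf x; exact: (continuousN (cf x)). Qed.

Lemma contB f g : continuous f -> continuous g -> continuous (fun t => f t - g t).
Proof. by move=> cf cg; exact: contD (contN cg). Qed.

Lemma cont_cst (r : R) : continuous (fun _ : R => r).
Proof. by move=> x; exact: cst_continuous. Qed.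

Lemma cont_norm f : continuous f -> continuous (fun t => `|f t|).
Proof. by move=> cf x; exact: continuous_comp (cf x) (@norm_continuous _ R (f x)). Qed.

Lemma cont_scale (a : R) g : continuous g -> continuous (fun t => g (a * t)).
Proof.
move=> cg x; apply: continuous_comp (cg (a * x)).
exact: mulrl_continuous.
Qed.

Lemma cont_cosM (a : R) : continuous (fun t => cos (a * t)).
Proof. by apply: cont_scale; exact: continuous_cos. Qed.

Lemma cont_sinM (a : R) : continuous (fun t => sin (a * t)).
Proof. by apply: cont_scale; exact: continuous_sin. Qed.

Lemma cont_sum (I : Type) (s : seq I) (F : I -> R -> R) :
  (forall i, continuous (F i)) -> continuous (fun t => \sum_(i <- s) F i t).
Proof.
move=> cF; elim: s => [|i s IH].
  by under eq_fun do rewrite big_nil; exact: cont_cst.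
by under eq_fun do rewrite big_cons; exact: contD.
Qed.

Lemma cont_bounded_itv f (a b : R) : a <= b -> continuous f ->
  exists M, forall t, a <= t <= b -> `|f t| <= M.
Proof.
move=> ab cf.
have [c _ Hc] := EVT_max ab (continuous_subspaceT (cont_norm cf)).
by exists `|f c| => t ht; apply: Hc; rewrite in_itv.
Qed.

End Continuity.

Section IntegralOnT.
Variables (R : realType) (mu : tmeas R).
Hypothesis muT : onT mu.
Local Notation D := (`[(- pi)%R, pi[%classic : set R).

Lemma measurable_fundom : measurable D.
Proof. exact: measurable_itv. Qed.

Let measurable_outside : measurable (~` D).
Proof. by apply: measurableC; exact: measurable_fundom. Qed.

Lemma integrable_cont (f : R -> R) : continuous f -> mu.-integrable setT (EFin \o f).
Proof.
move=> cf; have mf : measurable_fun setT f := continuous_measurable_fun cf.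
apply/(@negligible_integrable _ _ _ mu setT (~` D) _ measurable_outside measurableT
  _ muT).
  exact/measurable_EFinP.
rewrite setTD setCK; apply: measurable_bounded_integrable.
- exact: measurable_fundom.
- by rewrite ltey_eq fin_num_measure//; exact: measurable_fundom.
- exact: measurable_funS mf.
have pp : - pi <= (pi : R) by have := @pi_ge0 R; lra.
have [M HM] := cont_bounded_itv pp cf.
exists M; split; first by rewrite num_real.
move=> M' hM' x /= /[!in_itv] /= /andP[h1 h2]; apply: le_trans (HM x _) (ltW hM').
by rewrite h1 (ltW h2).
Qed.

Lemma rint_Rintegral (f : R -> R) : continuous f -> rint mu f = Rintegral mu D f.
Proof.
move=> cf; rewrite /rint /Rintegral.
rewrite (@negligible_integral _ _ _ mu setT (~` D) (EFin \o f) measurable_outside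
  measurableT _ muT) ?setTD ?setCK //.
exact: integrable_cont.
Qed.

Let integrable_fundom (f : R -> R) : continuous f -> mu.-integrable D (EFin \o f).
Proof.
move=> cf; apply: (@integrableS _ _ _ mu setT D _ measurableT measurable_fundom) => //.
exact: integrable_cont.
Qed.

Lemma rintD (f g : R -> R) : continuous f -> continuous g ->
  rint mu (fun t => f t + g t) = rint mu f + rint mu g.
Proof.
move=> cf cg; rewrite !rint_Rintegral //; last exact: contD.
by apply: RintegralD; [exact: measurable_fundom|exact: integrable_fundom..].
Qed.

Lemma rintZ (r : R) (f : R -> R) : continuous f ->
  rint mu (fun t => r * f t) = r * rint mu f.
Proof.
move=> cf; rewrite !rint_Rintegral //; last exact: contM (@cont_cst _ r) cf.
by apply: RintegralZl; [exact: measurable_fundom|exact: integrable_fundom].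
Qed.

Lemma rintN (f : R -> R) : continuous f -> rint mu (fun t => - f t) = - rint mu f.
Proof.
move=> cf; rewrite -mulN1r -rintZ //.
by congr rint; apply/funext => t; rewrite mulN1r.
Qed.

Lemma rintB (f g : R -> R) : continuous f -> continuous g ->
  rint mu (fun t => f t - g t) = rint mu f - rint mu g.
Proof. by move=> cf cg; rewrite rintD ?rintN //; exact: contN. Qed.

Lemma rint_cst (r : R) : rint mu (fun _ => r) = r * rint mu (fun _ => 1).
Proof.
by rewrite -rintZ; [congr rint; apply/funext => t; rewrite mulr1|exact: cont_cst].
Qed.

Lemma rint_sum (I : Type) (s : seq I) (F : I -> R -> R) :
  (forall i, continuous (F i)) ->
  rint mu (fun t => \sum_(i <- s) F i t) = \sum_(i <- s) rint mu (F i).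
Proof.
move=> cF; elim: s => [|i s IH].
  rewrite big_nil; under eq_fun do rewrite big_nil.
  by rewrite rint_cst mul0r.
rewrite big_cons -IH; under eq_fun do rewrite big_cons.
by rewrite rintD //; exact: cont_sum.
Qed.

Lemma le_rint (f g : R -> R) : continuous f -> continuous g ->
  (forall t, - pi <= t <= pi -> f t <= g t) -> rint mu f <= rint mu g.
Proof.
move=> cf cg fg; rewrite !rint_Rintegral //.
apply: le_Rintegral; [exact: measurable_fundom|exact: integrable_fundom..|].
by move=> x /= /[!in_itv] /= /andP[h1 h2]; apply: fg; rewrite h1 (ltW h2).
Qed.

Lemma ler_norm_rint (f g : R -> R) : continuous f -> continuous g ->
  (forall t, - pi <= t <= pi -> `|f t| <= g t) -> `|rint mu f| <= rint mu g.
Proof.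
move=> cf cg fg; rewrite ler_norml -rintN //; apply/andP; split.
  apply: le_rint (contN _) _ _ => // t /fg; rewrite ler_norml => /andP[+ _].
  by rewrite lerNl.
by apply: le_rint => // t /fg; rewrite ler_norml => /andP[].
Qed.

End IntegralOnT.

Section TrigIntegrals.
Variable R : realType.

Definition trig (w : R[i]) (x t : R) : R := cRe w * cos (x * t) - cIm w * sin (x * t).

Lemma trigE (w : R[i]) (x t : R) : trig w x t = cRe (w * expi (x * t)).
Proof. by rewrite ReM. Qed.

Lemma cont_trig (w : R[i]) (x : R) : continuous (trig w x).
Proof.
apply: contB; apply: contM; try exact: cont_cst.
  exact: cont_cosM.
exact: cont_sinM.
Qed.

Let pi2_neq0 : (2 * pi : R) != 0.
Proof. by rewrite mulf_neq0 // gt_eqF // pi_gt0. Qed.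

Lemma rint_cos_covlag (mu : tmeas R) (k : nat) :
  rint mu (fun t => cos (k%:R * t)) = 2 * pi * cRe (covlag mu k).
Proof. by rewrite /covlag /= mulrA mulfV ?mul1r. Qed.

Lemma rint_sin_covlag (mu : tmeas R) (k : nat) :
  rint mu (fun t => sin (k%:R * t)) = - (2 * pi * cIm (covlag mu k)).
Proof. by rewrite /covlag /= mulrN opprK mulrA mulfV ?mul1r. Qed.

Lemma rint_mass (mu : tmeas R) :
  rint mu (fun _ => 1) = 2 * pi * cRe (covlag mu 0%N).
Proof.
by rewrite -rint_cos_covlag; congr rint; apply/funext => t; rewrite mul0r cos0.
Qed.

Lemma rint_trig (mu : tmeas R) (w : R[i]) (k : nat) : onT mu ->
  rint mu (trig w k%:R) = 2 * pi * cRe (w * (covlag mu k)^*%C).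
Proof.
move=> muT; have cc := @cont_cosM R k%:R; have cs := @cont_sinM R k%:R.
rewrite /trig rintB ?rintZ ?rint_cos_covlag ?rint_sin_covlag //.
  by rewrite ReM ReJ ImJ; lra.
all: by apply: contM => //; exact: cont_cst.
Qed.

Lemma rint_trigN (mu : tmeas R) (w : R[i]) (k : nat) : onT mu ->
  rint mu (trig w (- k%:R)) = 2 * pi * cRe (w * covlag mu k).
Proof.
move=> muT.
have -> : trig w (- k%:R) = trig w^*%C k%:R.
  by apply/funext => t; rewrite /trig ReJ ImJ mulNr cosN sinN; lra.
by rewrite rint_trig // -rmorphM ReJ.
Qed.

End TrigIntegrals.

Lemma poly_interpolation (K : fieldType) (s : seq K) (val : K -> K) : uniq s ->
  exists p : {poly K}, (size p <= size s)%N /\ forall z, z \in s -> p.[z] = val z.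
Proof.
elim: s => [_|z s IH /= /andP[zs us]]; first by exists 0; rewrite size_poly0.
have [p [sp hp]] := IH us.
set q := \prod_(w <- s) ('X - w%:P).
have qE x : q.[x] = \prod_(w <- s) (x - w).
  by rewrite /q horner_prod; apply: eq_bigr => w _; rewrite hornerXsubC.
have qz0 : q.[z] != 0.
  rewrite qE prodf_seq_neq0; apply/allP => w ws /=.
  by rewrite subr_eq0; apply: contraNneq zs => ->.
exists (p + ((val z - p.[z]) / q.[z]) *: q); split.
  apply: leq_trans (size_polyD _ _) _; rewrite geq_max (leq_trans sp) //=.
  by apply: leq_trans (size_scale_leq _ _) _; rewrite /q size_prod_XsubC.
move=> x; rewrite in_cons => /orP[/eqP ->|xs].
  by rewrite hornerD hornerZ mulfVK //; ring.
by rewrite hornerD hornerZ (qE x) (bigD1_seq x) //= subrr mul0r mulr0 addr0 hp.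
Qed.

Section PeriodicOnCircle.
Variable R : realType.

Lemma cos_eq1_le2pi (x : R) : `|x| <= 2 * pi -> cos x = 1 ->
  [\/ x = 0, x = 2 * pi | x = - (2 * pi)].
Proof.
move=> hx c1; have pi0 := @pi_ge0 R.
have cx : cos `|x| = 1 by rewrite cos_norm.
have [x0|x2pi] : `|x| = 0 \/ `|x| = 2 * pi.
- have [xlepi|xgtpi] := leP `|x| pi.
    left; apply: (@cos_inj R); rewrite ?cos0 // in_itv /= ?lexx ?pi0 //.
    by rewrite normr_ge0 xlepi.
  right; have e2 : (2 * pi : R) = pi *+ 2 by rewrite mulr_natl.
  have h1 : 2 * pi - `|x| \in `[0, pi] by rewrite in_itv /=; apply/andP; split; lra.
  have h0 : (0 : R) \in `[0, pi] by rewrite in_itv /= lexx pi0.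
  have : cos (2 * pi - `|x|) = cos 0 by rewrite cos0 cosB cx e2 cos2pi sin2pi; lra.
  by move/(cos_inj h1 h0); lra.
- by constructor 1; apply/normr0_eq0.
- move: x2pi; case: (ger0P x) => _ x2pi; first by constructor 2.
  by constructor 3; rewrite -x2pi opprK.
Qed.

(* On [-pi, pi], [expi] identifies only the endpoints, where periodicity applies. *)
Lemma contT_expi (f : R -> R) (a b : R) : contT f ->
  - pi <= a <= pi -> - pi <= b <= pi -> expi a = expi b -> f a = f b.
Proof.
move=> [_ fp] /andP[a1 a2] /andP[b1 b2] [ca sa].
have c1 : cos (a - b) = 1 by rewrite cosB ca sa -!expr2 cos2Dsin2.
have hab : `|a - b| <= 2 * pi by rewrite ler_norml; apply/andP; split; lra.
case: (cos_eq1_le2pi hab c1) => h.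
- by have -> : a = b by lra.
- by have -> : a = b + 2 * pi by lra.
- by have -> : b = a + 2 * pi by lra.
Qed.

End PeriodicOnCircle.

Section TrigPoly.
Variables (R : realType) (n : nat).

Definition trigpoly (p : {poly R[i]}) (t : R) : R := \sum_(j < n.+1) trig p`_j j%:R t.

Definition lagform (p : {poly R[i]}) (x : 'I_n.+1 -> R[i]) : R :=
  \sum_(j < n.+1) 2 * pi * cRe (p`_j * (x j)^*%C).

Lemma cont_trigpoly (p : {poly R[i]}) : continuous (trigpoly p).
Proof. by apply: cont_sum => j; exact: cont_trig. Qed.

Lemma trigpolyE (p : {poly R[i]}) (t : R) : (size p <= n.+1)%N ->
  trigpoly p t = cRe p.[expi t].
Proof.
move=> sp; rewrite (horner_coef_wide _ sp) Re_sum; apply: eq_bigr => j _.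
by rewrite trigE expiX.
Qed.

Lemma rint_trigpoly (mu : tmeas R) (p : {poly R[i]}) : onT mu ->
  rint mu (trigpoly p) = lagform p (fun j => covlag mu j).
Proof.
move=> muT; rewrite (rint_sum muT); last by move=> j; exact: cont_trig.
by apply: eq_bigr => j _; rewrite rint_trig.
Qed.

End TrigPoly.

Section NormSqTrig.
Variables (R : realType) (n : nat) (b : 'I_n.+1 -> R[i]).

Definition vecpoly : {poly R[i]} := \poly_(l < n.+1) b (inord l).

Lemma vecpoly_expi (t : R) : vecpoly.[expi t] = \sum_(l < n.+1) b l * expi (l%:R * t).
Proof. by rewrite horner_poly; apply: eq_bigr => l _; rewrite expiX inord_val. Qed.

Definition normsq_trig (t : R) : R :=
  \sum_(k < n.+1) \sum_(l < n.+1) trig ((b k)^*%C * b l) (l%:R - k%:R) t.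

(* [2 pi Re (u *m toeplitz x *m u^* )] for the row vector [u] with entries [(b l)^*] *)
Definition toeplitz_form (x : 'I_n.+1 -> R[i]) : R :=
  \sum_(k < n.+1) \sum_(l < n.+1)
    2 * pi * cRe ((b k)^*%C * b l * (toeplitz x l k)^*%C).

Lemma normsq_trigE (t : R) :
  normsq_trig t = cRe vecpoly.[expi t] ^+ 2 + cIm vecpoly.[expi t] ^+ 2.
Proof.
have -> : cRe vecpoly.[expi t] ^+ 2 + cIm vecpoly.[expi t] ^+ 2
    = cRe ((vecpoly.[expi t])^*%C * vecpoly.[expi t]) by rewrite ReM ReJ ImJ; ring.
rewrite vecpoly_expi rmorph_sum /= mulr_suml Re_sum; apply: eq_bigr => k _.
rewrite mulr_sumr Re_sum; apply: eq_bigr => l _.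
by rewrite trigE rmorphM; congr cRe; rewrite mulrBl -conj_expiM; ring.
Qed.

Lemma cont_normsq_trig : continuous normsq_trig.
Proof. by apply: cont_sum => k; apply: cont_sum => l; exact: cont_trig. Qed.

Lemma normsq_trig_ge0 (t : R) : 0 <= normsq_trig t.
Proof. by rewrite normsq_trigE addr_ge0 // sqr_ge0. Qed.

Lemma normsq_trig_eq0 (t : R) : normsq_trig t = 0 -> root vecpoly (expi t).
Proof.
move=> h; apply/eqP; move: h; rewrite normsq_trigE.
case: (vecpoly.[expi t]) => x y /= h.
have x0 : x ^+ 2 = 0 by apply/eqP; rewrite eq_le sqr_ge0 andbT -h lerDl sqr_ge0.
move: h; rewrite x0 add0r => /eqP; rewrite sqrf_eq0 => /eqP ->.
by move/eqP: x0; rewrite sqrf_eq0 => /eqP ->.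
Qed.

Lemma rint_normsq_trig (mu : tmeas R) : onT mu ->
  rint mu normsq_trig = toeplitz_form (fun j => covlag mu j).
Proof.
move=> muT; rewrite (rint_sum muT); last first.
  by move=> k; apply: cont_sum => l; exact: cont_trig.
apply: eq_bigr => k _; rewrite (rint_sum muT); last by move=> l; exact: cont_trig.
apply: eq_bigr => l _; rewrite mxE; case: leqP => kl.
  rewrite inordK; last by apply: leq_ltn_trans (leq_subr _ _) (ltn_ord l).
  by rewrite -natrB // rint_trig.
rewrite inordK; last by apply: leq_ltn_trans (leq_subr _ _) (ltn_ord k).
by rewrite conjcK -[_ - _]opprK opprB -natrB ?rint_trigN //; exact: ltnW.
Qed.

End NormSqTrig.

Lemma toeplitz_form_kernel (R : realType) (n : nat) (c : 'I_n.+1 -> R[i])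
    (v : 'rV[R[i]]_n.+1) :
  v *m toeplitz c = 0 -> toeplitz_form (fun l => (v 0 l)^*%C) c = 0.
Proof.
move=> vT; rewrite /toeplitz_form big1 // => k _.
rewrite -mulr_sumr -Re_sum.
have -> : \sum_(l < n.+1) (v 0 k)^*%C^*%C * (v 0 l)^*%C * (toeplitz c l k)^*%C
    = v 0 k * ((v *m toeplitz c) 0 k)^*%C.
  rewrite !mxE rmorph_sum mulr_sumr; apply: eq_bigr => l _.
  by rewrite conjcK rmorphM mulrA.
by rewrite vT mxE conjc0 !mulr0.
Qed.

Section LagConvergence.
Variables (R : realType) (n : nat) (x : nat -> 'I_n.+1 -> R[i]) (X : 'I_n.+1 -> R[i]).
Hypotheses (cvgRe : forall j, (fun k => cRe (x k j)) @ \oo --> cRe (X j))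
  (cvgIm : forall j, (fun k => cIm (x k j)) @ \oo --> cIm (X j)).

Let cvg_sum (I : Type) (s : seq I) (u : I -> nat -> R) (l : I -> R) :
  (forall i, u i @ \oo --> l i) ->
  (fun k => \sum_(i <- s) u i k) @ \oo --> \sum_(i <- s) l i.
Proof.
move=> hu; elim: s => [|i s IH].
  by rewrite big_nil; under eq_fun do rewrite big_nil; exact: cvg_cst.
by rewrite big_cons; under eq_fun do rewrite big_cons; exact: cvgD.
Qed.

Let cvg_Re_mul (a : R[i]) (j : 'I_n.+1) :
  (fun k => cRe (a * x k j)) @ \oo --> cRe (a * X j).
Proof.
rewrite ReM; under eq_fun do rewrite ReM.
by apply: cvgB; apply: cvgMl_tmp.
Qed.

Let cvg_Re_mulJ (a : R[i]) (j : 'I_n.+1) :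
  (fun k => cRe (a * (x k j)^*%C)) @ \oo --> cRe (a * (X j)^*%C).
Proof.
rewrite ReM ReJ ImJ; under eq_fun do rewrite ReM ReJ ImJ.
by apply: cvgB; apply: cvgMl_tmp => //; exact: cvgN.
Qed.

Lemma lagform_cvg (p : {poly R[i]}) : (fun k => lagform p (x k)) @ \oo --> lagform p X.
Proof. by apply: cvg_sum => j; apply: cvgMl_tmp. Qed.

Lemma toeplitz_form_cvg (b : 'I_n.+1 -> R[i]) :
  (fun k => toeplitz_form b (x k)) @ \oo --> toeplitz_form b X.
Proof.
apply: cvg_sum => k; apply: cvg_sum => l; apply: cvgMl_tmp.
rewrite mxE; under eq_fun do rewrite mxE.
case: leqP => _; first exact: cvg_Re_mulJ.
by rewrite conjcK; under eq_fun do rewrite conjcK; exact: cvg_Re_mul.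
Qed.

End LagConvergence.

Section Domination.
Variables (R : realType) (a b : R) (g P : R -> R).
Hypotheses (ab : a <= b) (cg : continuous g) (cP : continuous P)
  (P_ge0 : forall t, a <= t <= b -> 0 <= P t)
  (g0 : forall t, a <= t <= b -> P t = 0 -> g t = 0).

(* q := P + (eps - |g|)^+ is positive on [a, b]; take C := max |g| / min q. *)
Lemma dominated_by_nonneg (eps : R) : 0 < eps ->
  exists2 C, 0 <= C & forall t, a <= t <= b -> `|g t| <= eps + C * P t.
Proof.
move=> eps0.
have [t1 _ gmax] := EVT_max ab (continuous_subspaceT (cont_norm cg)).
pose d t := eps - `|g t|.
pose q t := P t + (d t + `|d t|) / 2.
have cd : continuous d by apply: contB; [exact: cont_cst|exact: cont_norm].
have cq : continuous q.
  apply: contD => //; apply: contM; last exact: cont_cst.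
  exact: contD cd (cont_norm cd).
have [t0 t0ab qmin] := EVT_min ab (continuous_subspaceT cq).
have dpos t : 0 <= (d t + `|d t|) / 2.
  by apply: divr_ge0 => //; case: (ger0P (d t)) => hd; lra.
move: t0ab; rewrite in_itv /= => t0ab.
have q0 : 0 < q t0.
  rewrite /q; case: (ltP `|g t0| eps) => hg.
    have dt0 : 0 < d t0 by rewrite /d subr_gt0.
    by rewrite gtr0_norm //; have := P_ge0 t0ab; lra.
  have : P t0 != 0.
    by apply/eqP => /(g0 t0ab) gt0; move: hg; rewrite gt0 normr0 leNgt eps0.
  by rewrite neq_lt ltNge P_ge0 //=; have := dpos t0; lra.
exists (`|g t1| / q t0); first by rewrite divr_ge0 // ltW.
move=> t tab; have tI : t \in `[a, b] by rewrite in_itv.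
have CP : 0 <= `|g t1| / q t0 * P t by rewrite mulr_ge0 ?divr_ge0 ?P_ge0 // ltW.
case: (leP `|g t| eps) => hg; first lra.
have qt : q t = P t by rewrite /q ltr0_norm ?subrr ?mul0r ?addr0 // /d subr_lt0.
have : `|g t1| / q t0 * q t0 <= `|g t1| / q t0 * P t.
  by rewrite -qt ler_wpM2l ?qmin // divr_ge0 // ltW.
by rewrite divfK ?gt_eqF //; have := gmax _ tI; lra.
Qed.

End Domination.

Lemma roots_seq (F : closedFieldType) (q : {poly F}) : q != 0 ->
  exists s : seq F, [/\ uniq s, (size s < size q)%N & forall z, root q z -> z \in s].
Proof.
move=> q0; have [r qE] := closed_field_poly_normal q.
have l0 : lead_coef q != 0 by rewrite lead_coef_eq0.
exists (undup r); split; first exact: undup_uniq.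
  by rewrite {1}qE size_scale // size_prod_XsubC ltnS size_undup.
by move=> z; rewrite {1}qE rootZ // root_prod_XsubC mem_undup.
Qed.

Section InterpolationAtZeros.
Variables (R : realType) (n : nat) (b : 'I_n.+1 -> R[i]).
Hypothesis b_neq0 : vecpoly b != 0.

(* The zeros of [normsq_trig b] are the points where [expi] hits one of the at
   most [n] roots of [vecpoly b]; interpolate [f] there. *)
Lemma interpolation_at_zeros (f : R -> R) : contT f ->
  exists p : {poly R[i]}, forall t, - pi <= t <= pi ->
    normsq_trig b t = 0 -> f t = trigpoly n p t.
Proof.
move=> fT; have [s [us ss rs]] := roots_seq b_neq0.
pose arg z := xget 0 [set t : R | - pi <= t <= pi /\ expi t = z].
have [p [sp hp]] := poly_interpolation (fun z => Complex (f (arg z)) 0) us.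
exists p => t tI /normsq_trig_eq0 /rs zs.
have sp' : (size p <= n.+1)%N.
  by rewrite (leq_trans sp) // ltnW // (leq_trans ss) // size_poly.
rewrite trigpolyE // hp //=.
have : exists t', - pi <= t' <= pi /\ expi t' = expi t by exists t.
by move=> /(xgetPex 0) [argI argE]; exact: contT_expi fT tI argI (esym argE).
Qed.

End InterpolationAtZeros.

Section DominatedDistance.
Variables (R : realType) (f h P : R -> R) (eps C : R).
Hypotheses (cf : continuous f) (ch : continuous h) (cP : continuous P)
  (fhP : forall t, - pi <= t <= pi -> `|f t - h t| <= eps + C * P t).

Let cg : continuous (fun t => f t - h t). Proof. exact: contB. Qed.

Let rint_dominated (mu : tmeas R) : onT mu ->
  `|rint mu (fun t => f t - h t)| <= eps * rint mu (fun _ => 1) + C * rint mu P.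
Proof.
move=> muT; rewrite -rint_cst // -rintZ // -rintD //; last 2 first.
- exact: cont_cst.
- by apply: contM => //; exact: cont_cst.
apply: ler_norm_rint => //; apply: contD; first exact: cont_cst.
by apply: contM => //; exact: cont_cst.
Qed.

Lemma rint_dist_dominated (mu nu : tmeas R) : onT mu -> onT nu ->
  `|rint nu f - rint mu f| <= `|rint nu h - rint mu h|
    + (eps * rint nu (fun _ => 1) + C * rint nu P)
    + (eps * rint mu (fun _ => 1) + C * rint mu P).
Proof.
move=> muT nuT.
have split_f m : onT m -> rint m f = rint m h + rint m (fun t => f t - h t).
  by move=> mT; rewrite rintB // addrC subrK.
rewrite (split_f nu) // (split_f mu) //.
have -> : forall A G1 A0 G0 : R, A + G1 - (A0 + G0) = (A - A0) + G1 - G0.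
  by move=> *; ring.
rewrite -addrA; apply: le_trans (ler_normD _ _) _; rewrite -addrA lerD2l.
apply: le_trans (ler_normB _ _) _.
by apply: lerD; exact: rint_dominated.
Qed.

End DominatedDistance.

Section UniformWeakConvergence.
Variables (R : realType) (n : nat) (c : 'I_n.+1 -> R[i])
  (chat : nat -> 'I_n.+1 -> R[i]) (mu0 : tmeas R) (v : 'rV[R[i]]_n.+1).
Hypotheses (mu0T : onT mu0) (lag0 : forall j : 'I_n.+1, covlag mu0 j = c j)
  (cvgRe : forall j, (fun k => cRe (chat k j)) @ \oo --> cRe (c j))
  (cvgIm : forall j, (fun k => cIm (chat k j)) @ \oo --> cIm (c j))
  (v_neq0 : v != 0) (vT : v *m toeplitz c = 0).

Let b := fun l : 'I_n.+1 => (v 0 l)^*%C.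

Let b_neq0 : vecpoly b != 0.
Proof.
apply: contra v_neq0 => /eqP b0; apply/eqP/rowP => j; rewrite mxE.
have := congr1 (fun q : {poly R[i]} => q`_j) b0.
rewrite coef_poly ltn_ord inord_val coef0 /b => vj.
by rewrite -[v 0 j]conjcK vj conjc0.
Qed.

Lemma rint_cvg_uniform (f : R -> R) : contT f -> forall eta : R, 0 < eta ->
  \forall k \near \oo, forall nu, Fset (chat k) nu -> `|rint nu f - rint mu0 f| < eta.
Proof.
move=> fT eta eta0; have cf := fT.1.
have [p fp] := interpolation_at_zeros b_neq0 fT.
pose m0 := 2 * pi * cRe (c ord0).
pose eps := eta / (4 * (`|m0| + 1)).
have eps0 : 0 < eps by rewrite divr_gt0 // mulr_gt0 //; lra.
have [C C0 fpC] : exists2 C, 0 <= C & forall t, - pi <= t <= pi ->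
    `|f t - trigpoly n p t| <= eps + C * normsq_trig b t.
  have pp : - pi <= (pi : R) by have := @pi_ge0 R; lra.
  apply: (dominated_by_nonneg (g := fun t => f t - trigpoly n p t) pp
    (contB cf (@cont_trigpoly _ n p)) (@cont_normsq_trig _ _ b) _ _ eps0).
  - by move=> t _; exact: normsq_trig_ge0.
  - by move=> t tI /(fp t tI) ->; rewrite subrr.
(* the bound of [rint_dist_dominated] for [mu0] and [nu \in Fset (chat k)] *)
pose B : nat -> R := fun k => `|lagform p (chat k) - lagform p c|
  + (eps * (2 * pi * cRe (chat k ord0)) + C * toeplitz_form b (chat k))
  + (eps * m0 + C * toeplitz_form b c).
have B_cvg : B @ \oo --> `|lagform p c - lagform p c|
    + (eps * m0 + C * toeplitz_form b c) + (eps * m0 + C * toeplitz_form b c).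
  apply: cvgD; [apply: cvgD|exact: cvg_cst].
    apply: cvg_norm; apply: cvgB; last exact: cvg_cst.
    exact: (lagform_cvg cvgRe cvgIm (p := p)).
  apply: cvgD; apply: cvgMl_tmp; last exact: (toeplitz_form_cvg cvgRe cvgIm (b := b)).
  by apply: cvgMl_tmp; exact: cvgRe.
rewrite subrr normr0 add0r toeplitz_form_kernel // mulr0 addr0 in B_cvg.
have B_lt : eps * m0 + eps * m0 < eta.
  have epsE : eps * (4 * (`|m0| + 1)) = eta.
    by rewrite divfK // mulf_neq0 // gt_eqF // ltr_pwDr.
  have := ler_wpM2l (ltW eps0) (ler_norm m0); lra.
near=> k => nu [nuT lag].
have := rint_dist_dominated cf (@cont_trigpoly _ n p) (@cont_normsq_trig _ _ b) fpC
  mu0T nuT.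
move/le_lt_trans; apply.
rewrite !rint_trigpoly // !rint_normsq_trig // !rint_mass (funext lag) (funext lag0).
rewrite (lag ord0) (lag0 ord0) -/m0.
by near: k; exact: cvgr_lt B_cvg _ B_lt.
Unshelve. all: end_near.
Qed.

End UniformWeakConvergence.

Lemma near_all_in {T : Type} {U : eqType} (F : set_system T) (s : seq U)
    (P : U -> T -> Prop) :
  Filter F -> (forall u, u \in s -> \forall t \near F, P u t) ->
  \forall t \near F, forall u, u \in s -> P u t.
Proof.
move=> FF; elim: s => [|u s IH] Ps; first by apply: nearW => t u; rewrite in_nil.
have Pu := Ps u (mem_head _ _).
have {IH}Ps' : \forall t \near F, forall w, w \in s -> P w t.
  by apply: IH => w ws; apply: Ps; rewrite in_cons ws orbT.
near=> t => w; rewrite in_cons => /predU1P[->|ws]; first by near: t.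
by move: w ws; near: t.
Unshelve. all: end_near.
Qed.

Lemma cvge0_squeeze (R : realType) {T : Type} (F : set_system T) {FF : ProperFilter F}
    (u : T -> \bar R) :
  (forall e : R, 0 < e -> \forall t \near F, (0 <= u t <= e%:E)%E) -> u @ F --> 0%E.
Proof.
move=> ue; have u_fin : \forall t \near F, u t \is a fin_num.
  apply: filterS (ue 1 ltr01) => t /andP[u0 u1].
  by rewrite ge0_fin_numE // (le_lt_trans u1) ?ltey.
apply: cvg_EFin => //; apply/cvgrPdist_le => e e0.
apply: filterS2 u_fin (ue e e0) => t ufin /andP[u0 ue'].
by rewrite /= sub0r normrN ger0_norm ?fine_ge0 // -lee_fin fineK.
Qed.

Section DiameterCvg.
Variables (R : realType) (delta : tmeas R -> tmeas R -> R)
  (F : nat -> set (tmeas R)) (mu0 : tmeas R).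
Hypotheses (dmet : is_metric delta) (dwc : weakly_continuous delta) (mu0T : onT mu0)
  (FT : forall k nu, F k nu -> onT nu) (F_neq0 : forall k, F k !=set0)
  (F_cvg : forall f, contT f -> forall eta : R, 0 < eta ->
     \forall k \near \oo, forall nu, F k nu -> `|rint nu f - rint mu0 f| < eta).

Let near_diam (e : R) : 0 < e -> \forall k \near \oo, (0 <= diam delta (F k) <= e%:E)%E.
Proof.
move=> e0; have [d_ge0 d_eq0 _ _] := dmet.
have d00 : delta mu0 mu0 = 0 by apply/(d_eq0 _ _ mu0T mu0T).2.
have [fs0 [fs1 [eta [cfs0 cfs1 eta0 dnear]]]] := dwc mu0T mu0T e0.
have : \forall k \near \oo, forall f, f \in fs0 ++ fs1 ->
    forall nu, F k nu -> `|rint nu f - rint mu0 f| < eta.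
  by apply: near_all_in => f; rewrite mem_cat => /orP[/cfs0|/cfs1] fT; exact: F_cvg.
apply: filterS => k Fk_near; have [nu Fnu] := F_neq0 k.
apply/andP; split.
  apply: (@le_trans _ _ (delta nu nu)%:E).
    by rewrite lee_fin; apply: d_ge0; exact: FT Fnu.
  by apply: ereal_sup_ubound; exists nu => //; exists nu.
apply: ge_ereal_sup => _ [m0 Fm0 [m1 Fm1 <-]]; rewrite lee_fin.
have w0 : weak_nbhd mu0 fs0 eta m0.
  by split; [exact: FT Fm0|move=> f f0; apply: Fk_near => //; rewrite mem_cat f0].
have w1 : weak_nbhd mu0 fs1 eta m1.
  by split; [exact: FT Fm1|move=> f f1; apply: Fk_near => //; rewrite mem_cat f1 orbT].
by have := dnear _ _ w0 w1; rewrite d00 subr0 => /(le_lt_trans (ler_norm _))/ltW.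
Qed.

Lemma diam_cvg0 : (fun k => diam delta (F k)) @ \oo --> 0%E.
Proof. exact: cvge0_squeeze near_diam. Qed.

End DiameterCvg.

Theorem corollary3 (R : realType) (n : nat) (c : 'I_n.+1 -> R[i])
  (chat : nat -> 'I_n.+1 -> R[i])
  (delta : tmeas R -> tmeas R -> R) :
  is_covlags c ->
  \det (toeplitz c) = 0 ->
  (forall k, is_covlags (chat k)) ->
  (forall j, (fun k => complex.Re (chat k j)) @ \oo --> complex.Re (c j)) ->
  (forall j, (fun k => complex.Im (chat k j)) @ \oo --> complex.Im (c j)) ->
  is_metric delta -> weakly_continuous delta ->
  (fun k => diam delta (Fset (chat k))) @ \oo --> 0%E.
Proof.
move=> [mu0 [mu0T lag0]] /eqP/det0P[v v_neq0 vT] chat_lags cvgRe cvgIm dmet dwc.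
apply: (diam_cvg0 dmet dwc mu0T _ chat_lags) => [k nu []//|f fT].
exact: rint_cvg_uniform mu0T lag0 cvgRe cvgIm v_neq0 vT f fT.
Qed.
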